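(* Let $r\ge2$ and let $F$ be an $r$-critical graph with $f$ vertices. For every $\epsilon>0$ there exists $\delta>0$ such that the following holds: if $n=\sum_{i=1}^r n_i>1/\delta$ and, for all $i\in[r]$, we have $0\le d_i\le n_i$, $|n_i-n/r|\le\delta n$ and $|\xi_i-d_i/n|\le\delta$, then, with $\boldsymbol{d}=(d_1,\dots,d_r)$ and $\boldsymbol{\xi}=(\xi_1,\dots,\xi_r)$, \[|F(n_1,\dots,n_r;\boldsymbol{d})-n^{f-1}P_F(\boldsymbol{\xi})|<\epsilon n^{f-1}.\]
   Context: A graph $F$ is $r$-critical if $\chi(F)=r+1$ and $F$ contains an edge $e$ with $\chi(F-e)=r$. A vertex $u$ of $F$ is critical if $\chi(F-u)=r$. $F(n_1,\dots,n_r;\boldsymbol{d})$ denotes the number of subgraphs isomorphic to $F$ in the graph $K(V_1,\dots,V_r)+z$, where $K(V_1,\dots,V_r)$ is the complete $r$-partite graph on disjoint parts with $|V_i|=n_i$, and $z$ is an extra vertex having exactly $d_i$ neighbors in $V_i$ for each $i$. Let $\mathrm{Aut}(F)$ denote the number of automorphisms of $F$. For $\boldsymbol{\xi}\in\mathbb{R}^r$, \[P_F(\boldsymbol{\xi})=\frac{1}{\mathrm{Aut}(F)}\sum_{u\text{ critical}}\ \sum_{\chi_u}\ \prod_{i=1}^r \frac{1}{r^{x_i}}\xi_i^{y_i},\] where the inner sum is over all proper colorings $\chi_u:V(F)\setminus\{u\}\to[r]$ of $F-u$, $y_i$ is the number of neighbors of $u$ receiving color $i$, and $x_i$ is the number of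 non-neighbors of $u$ (other than $u$) receiving color $i$. *)

From HB Require Import structures.
From mathcomp Require Import all_boot all_order all_fingroup all_algebra.
From mathcomp Require Import reals.
Set Implicit Arguments. Unset Strict Implicit. Unset Printing Implicit Defensive.
Import Order.TTheory GRing.Theory Num.Theory.

(* Graphs are symmetric irreflexive relations [adj : rel T] on a finType T. *)

(* S is properly colourable with k colours (colours are naturals < k;
   any k-colouring with k <= #|T| can be encoded in 'I_#|T|). *)
Definition colorable_on (T : finType) (adj : rel T) (S : {set T}) (k : nat) : bool :=
  [exists c : {ffun T -> 'I_#|T|},
     [forall x in S, c x < k] &&
     [forall x in S, forall y in S, adj x y ==> (c x != c y)]].

(* Chromatic number of the subgraph induced on S: least k with S k-colourable
   (S is always #|T|-colourable). *)
Definition chrom_on (T : finType) (adj : rel T) (S : {set T}) : nat :=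
  find (colorable_on adj S) (iota 0 #|T|.+1).

Definition chrom (T : finType) (adj : rel T) : nat := chrom_on adj setT.

Definition del_edge (T : finType) (adj : rel T) (x y : T) : rel T :=
  fun a b => adj a b && ~~ (((a == x) && (b == y)) || ((a == y) && (b == x))).

Definition r_critical (T : finType) (adj : rel T) (r : nat) : Prop :=
  chrom adj = r.+1 /\ exists x y, adj x y /\ chrom (del_edge adj x y) = r.

Definition crit_vertex (T : finType) (adj : rel T) (r : nat) (u : T) : bool :=
  chrom_on adj (~: [set u]) == r.

Definition aut_num (T : finType) (adj : rel T) : nat :=
  #|[set s : {perm T} | [forall x, forall y, adj (s x) (s y) == adj x y]]|.

(* The host graph K(V_1,...,V_r) + z.  Vertices: Some (existT i j) with
   j : 'I_(n i) is the j-th vertex of V_i, and None is z.  z is joined to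
   the first d_i vertices of V_i. *)
Definition hostV (r : nat) (n : 'I_r -> nat) : finType :=
  option {i : 'I_r & 'I_(n i)}.

Definition host_adj (r : nat) (n d : 'I_r -> nat) : rel (hostV n) :=
  fun a b => match a, b with
  | Some a', Some b' => tag a' != tag b'
  | Some a', None => (tagged a' : nat) < d (tag a')
  | None, Some b' => (tagged b' : nat) < d (tag b')
  | None, None => false
  end.

(* Number of subgraphs of (U, adjG) isomorphic to (T, adj): the number of
   distinct pairs (vertex set, edge set) arising as images of injective
   homomorphisms T -> U. *)
Definition sub_copies (T U : finType) (adj : rel T) (adjG : rel U) : nat :=
  #|[set ((phi @: [set: T]),
          [set (phi p.1, phi p.2) | p in [set p : T * T | adj p.1 p.2]])
     | phi : {ffun T -> U} in [set phi : {ffun T -> U} |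
                 injectiveb phi &&
                 [forall x, forall y, adj x y ==> adjG (phi x) (phi y)]]]|.

Definition Fcount (T : finType) (adj : rel T) (r : nat) (n d : 'I_r -> nat) : nat :=
  sub_copies adj (@host_adj r n d).

Definition PF (R : realType) (T : finType) (adj : rel T) (r : nat) (xi : 'I_r -> R) : R :=
  (aut_num adj)%:R^-1 *
  \sum_(u : T | crit_vertex adj r u)
    \sum_(c : {ffun {x : T | x != u} -> 'I_r} |
            [forall v, forall w, adj (val v) (val w) ==> (c v != c w)])
      \prod_(i < r)
        ((r%:R ^+ #|[set v | ~~ adj u (val v) & c v == i]|)^-1 *
         xi i ^+ #|[set v | adj u (val v) & c v == i]|).

From HB Require Import structures.
From mathcomp Require Import all_boot all_order all_fingroup all_algebra.
From mathcomp Require Import reals.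
From mathcomp Require Import zify ring lra.
Import Order.TTheory GRing.Theory Num.Theory.
Set Implicit Arguments. Unset Strict Implicit.

(* Every copy of F in K(V_1,...,V_r) + z is the image of exactly |Aut F|
   embeddings.  As F is not r-colourable, an embedding sends exactly one vertex
   u to z, and then the part indices of the other images properly r-colour
   F - u, so u is critical.  Up to O(n^(f-2)) non-injective maps, the
   embeddings with u |-> z are the homomorphisms sending only u to z, and those
   inducing a given colouring c of F - u number exactly
   prod_i d_i^(y_i) n_i^(x_i).  Since d_i / n is within delta of xi_i and
   n_i / n within delta of 1 / r, each such product is within
   O(delta n^(f-1)) of n^(f-1) prod_i xi_i^(y_i) / r^(x_i). *)

Section Coloring.
Variables (T : finType) (adj : rel T).

Lemma colorable_on_leq (S : {set T}) k k' :
  k <= k' -> colorable_on adj S k -> colorable_on adj S k'.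
Proof.
move=> le_kk' /existsP[c /andP[c_lt c_ok]]; apply/existsP; exists c.
rewrite c_ok andbT; apply/forallP => x; apply/implyP => xS.
by apply: leq_trans le_kk'; have /implyP := forallP c_lt x; apply.
Qed.

Lemma chrom_on_leq (S : {set T}) k : k <= #|T| -> colorable_on adj S k -> chrom_on adj S <= k.
Proof.
move=> kT ck; rewrite leqNgt; apply/negP => lt_k.
have := before_find 0 lt_k; rewrite nth_iota ?add0n ?ck //; lia.
Qed.

Lemma colorable_on_fun (S : {set T}) k (g : T -> 'I_k) : k <= #|T| ->
  (forall x y, x \in S -> y \in S -> adj x y -> g x != g y) -> colorable_on adj S k.
Proof.
move=> kT g_ok; apply/existsP; exists [ffun x => widen_ord kT (g x)]; apply/andP; split.
  by apply/forallP => x; apply/implyP => _; rewrite ffunE /= ltn_ord.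
apply/forallP => x; apply/implyP => xS; apply/forallP => y; apply/implyP => yS.
apply/implyP => axy; rewrite !ffunE; apply/negP => /eqP [] /val_inj gxy.
by move: (g_ok x y xS yS axy); rewrite gxy eqxx.
Qed.

Hypothesis irr : irreflexive adj.

Lemma colorable_on_card (S : {set T}) : colorable_on adj S #|T|.
Proof.
apply: (colorable_on_fun (g := enum_rank)) => // x y _ _ axy.
by apply: contraTneq axy => /enum_rank_inj ->; rewrite irr.
Qed.

Lemma colorable_chrom_on (S : {set T}) : colorable_on adj S (chrom_on adj S).
Proof.
have has_col : has (colorable_on adj S) (iota 0 #|T|.+1).
  by apply/hasP; exists #|T|; rewrite ?colorable_on_card // mem_iota /=.
have := nth_find 0 has_col; rewrite nth_iota ?add0n //.
by rewrite -[X in _ < X](size_iota 0 #|T|.+1) -has_find.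
Qed.

Lemma colorable_on_setC1 u k : k < #|T| ->
  colorable_on adj (~: [set u]) k -> colorable_on adj setT k.+1.
Proof.
move=> kT /existsP[c /andP[c_lt c_ok]].
apply/existsP; exists [ffun x => if x == u then Ordinal kT else c x]; apply/andP; split.
  apply/forallP => x; apply/implyP => _; rewrite ffunE; case: eqP => [_|/eqP xu] //=.
  by have := forallP c_lt x; rewrite !inE xu /= => /ltnW.
apply/forallP => x; apply/implyP => _; apply/forallP => y; apply/implyP => _.
apply/implyP => axy; rewrite !ffunE.
case: (eqVneq x u) => [xu|xu]; case: (eqVneq y u) => [yu|yu].
- by move: axy; rewrite xu yu irr.
- apply/negP => /eqP e; have := forallP c_lt y; rewrite !inE yu -e /=; lia.
- apply/negP => /eqP e; have := forallP c_lt x; rewrite !inE xu e /=; lia.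
- have := forallP c_ok x; rewrite !inE xu /= => /forallP /(_ y).
  by rewrite !inE yu axy.
Qed.

Variable r : nat.
Hypothesis crit : r_critical adj r.

Lemma r_critical_lt_card : r < #|T|.
Proof.
case: crit => chrom_r _; rewrite /chrom in chrom_r.
by rewrite -chrom_r chrom_on_leq ?colorable_on_card.
Qed.

Lemma r_critical_no_coloring (g : T -> 'I_r) : ~ (forall x y, adj x y -> g x != g y).
Proof.
move=> g_ok; case: crit => chrom_r _; rewrite /chrom in chrom_r.
have rT := ltnW r_critical_lt_card.
have col_r := colorable_on_fun (S := setT) rT (fun x y _ _ => g_ok x y).
by have := chrom_on_leq rT col_r; rewrite chrom_r ltnn.
Qed.

Definition proper_coloring (u : T) (c : {ffun {x : T | x != u} -> 'I_r}) : bool :=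
  [forall v, forall w, adj (val v) (val w) ==> (c v != c w)].

(* chi(F - u) < r is impossible: adding u as a new colour class would then
   r-colour F. *)
Lemma crit_vertex_of_coloring u (c : {ffun {x : T | x != u} -> 'I_r}) :
  0 < r -> proper_coloring c -> crit_vertex adj r u.
Proof.
move=> r_pos c_ok; have rT := ltnW r_critical_lt_card.
pose g x := if insub x is Some v then c v else Ordinal r_pos.
have col_r : colorable_on adj (~: [set u]) r.
  apply: (colorable_on_fun (g := g) rT) => x y; rewrite !inE => xu yu axy.
  rewrite /g (insubT (fun x : T => x != u) xu) (insubT (fun x : T => x != u) yu).
  by have /implyP := forallP (forallP c_ok (Sub x xu)) (Sub y yu); apply.
rewrite /crit_vertex eqn_leq chrom_on_leq //= leqNgt; apply/negP => lt_r.
case: crit => chrom_r _; rewrite /chrom in chrom_r.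
have kT : chrom_on adj (~: [set u]) < #|T| by have := r_critical_lt_card; lia.
have := colorable_on_leq lt_r (colorable_on_setC1 kT (colorable_chrom_on _)).
by move/(chrom_on_leq rT); rewrite chrom_r ltnn.
Qed.

End Coloring.

Section Copies.
Variables (T U : finType) (adj : rel T) (adjG : rel U).

Definition embeddings := [set phi : {ffun T -> U} |
  injectiveb phi && [forall x, forall y, adj x y ==> adjG (phi x) (phi y)]].

Definition copy_of (phi : {ffun T -> U}) :=
  (phi @: [set: T], [set (phi p.1, phi p.2) | p in [set p : T * T | adj p.1 p.2]]).

Definition automorphisms :=
  [set s : {perm T} | [forall x, forall y, adj (s x) (s y) == adj x y]].

Lemma copy_of_fiber phi : phi \in embeddings ->
  [set psi in embeddings | copy_of psi == copy_of phi] =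
  [set [ffun x => phi (s x)] | s : {perm T} in automorphisms].
Proof.
rewrite inE => /andP[/injectiveP phiI phiH].
apply/setP => psi; apply/idP/idP.
- rewrite !inE => /andP[/andP[/injectiveP psiI psiH] /eqP [eqV eqE]].
  have ex_pre x : exists y, phi y == psi x.
    have : psi x \in psi @: [set: T] by apply: imset_f.
    by rewrite eqV => /imsetP[y _ ->]; exists y.
  pose g x := odflt x [pick y | phi y == psi x].
  have gP x : phi (g x) = psi x.
    rewrite /g; case: pickP => [y /eqP //|none].
    by have [y] := ex_pre x; rewrite none.
  have gI : injective g by move=> x y e; apply: psiI; rewrite -!gP e.
  apply/imsetP; exists (perm gI); last by apply/ffunP => x; rewrite ffunE permE gP.
  rewrite inE; apply/forallP => x; apply/forallP => y; rewrite !permE.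
  apply/eqP; apply/idP/idP => a.
  + have : (psi x, psi y) \in
        [set (phi p.1, phi p.2) | p in [set p : T * T | adj p.1 p.2]].
      by apply/imsetP; exists (g x, g y); rewrite ?inE //= !gP.
    rewrite -eqE => /imsetP[[a1 a2]]; rewrite inE /= => a12 [] e1 e2.
    by rewrite (psiI _ _ e1) (psiI _ _ e2).
  + have : (psi x, psi y) \in
        [set (psi p.1, psi p.2) | p in [set p : T * T | adj p.1 p.2]].
      by apply/imsetP; exists (x, y); rewrite ?inE.
    rewrite eqE => /imsetP[[a1 a2]]; rewrite inE /= -!gP => a12 [] e1 e2.
    by rewrite (phiI _ _ e1) (phiI _ _ e2).
- case/imsetP => s s_aut ->; rewrite inE in s_aut.
  have sA x y : adj (s x) (s y) = adj x y.
    by have /forallP/(_ x)/forallP/(_ y)/eqP := s_aut.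
  rewrite !inE; apply/andP; split; first apply/andP; first split.
  + by apply/injectiveP => x y; rewrite !ffunE => /phiI /perm_inj.
  + apply/forallP => x; apply/forallP => y; apply/implyP => a; rewrite !ffunE.
    by have := forallP (forallP phiH (s x)) (s y); rewrite sA a.
  + apply/eqP; rewrite /copy_of; congr pair.
    * apply/setP => z; apply/imsetP/imsetP => [[x _ ->]|[x _ ->]].
        by exists (s x); rewrite ?inE ?ffunE.
      by exists (s^-1 x)%g; rewrite ?inE ?ffunE ?permKV.
    * apply/setP => z; apply/imsetP/imsetP => [[[x y]]|[[x y]]]; rewrite inE /= => a ->.
        by exists (s x, s y); rewrite ?inE ?ffunE //= sA.
      exists ((s^-1 x)%g, (s^-1 y)%g); rewrite ?inE ?ffunE //= ?permKV //.
      by rewrite -sA !permKV.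
Qed.

Lemma card_copy_of_fiber phi : phi \in embeddings ->
  #|[set psi in embeddings | copy_of psi == copy_of phi]| = #|automorphisms|.
Proof.
move=> phi_emb; rewrite copy_of_fiber //; apply: card_in_imset => s t _ _ /ffunP e.
move: phi_emb; rewrite inE => /andP[/injectiveP phiI _].
by apply/permP => x; have := e x; rewrite !ffunE; apply: phiI.
Qed.

(* Copies of F are the orbits of Aut(F) acting freely on embeddings. *)
Lemma sub_copies_mul_aut : sub_copies adj adjG * aut_num adj = #|embeddings|.
Proof.
have -> : aut_num adj = #|automorphisms| by [].
rewrite -[#|embeddings|]sum1_card (partition_big_imset copy_of) /=.
rewrite -sum_nat_const; apply: eq_bigr => k /imsetP[phi phi_emb ->].
rewrite -(card_copy_of_fiber phi_emb) -sum1_card.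
by apply: eq_bigl => psi; rewrite !inE.
Qed.

End Copies.

Lemma sum_card_exchange (I J : finType) (B : I -> {set J}) :
  \sum_i #|B i| = \sum_j #|[set i | j \in B i]|.
Proof.
under eq_bigr do rewrite -sum1_card big_mkcond /=.
rewrite exchange_big /=; apply: eq_bigr => j _.
by rewrite -sum1_card [RHS]big_mkcond /=; apply: eq_bigr => i _; rewrite inE.
Qed.

Lemma card_hostV r (n : 'I_r -> nat) : #|hostV n| = (\sum_(i < r) n i).+1.
Proof.
rewrite /hostV card_option card_tagged sumnE big_map big_enum /=.
by congr S; apply: eq_bigr => i _; rewrite card_ord.
Qed.

Section Host.
Variables (T : finType) (adj : rel T) (r : nat) (n d : 'I_r -> nat).
Local Notation V := (hostV n).
Local Notation G := (@host_adj r n d).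

Definition embeddings_at u := [set phi in embeddings adj G | phi u == None].

Definition homs_at u := [set phi : {ffun T -> V} |
  [forall x, forall y, adj x y ==> G (phi x) (phi y)] &&
  (phi u == None) && [forall v, (v != u) ==> (phi v != None)]].

Definition collisions u (p : T * T) := [set phi : {ffun T -> V} |
  (p.1 != p.2) && (p.1 != u) && (p.2 != u) && (phi u == None) && (phi p.1 == phi p.2)].

Lemma embeddings_at_sub u : embeddings_at u \subset homs_at u.
Proof.
apply/subsetP => phi; rewrite !inE => /andP[/andP[/injectiveP phiI ->] /eqP phi_u].
rewrite phi_u eqxx /=; apply/forallP => v; apply/implyP => vu.
by apply: contra vu => /eqP phi_v; apply/eqP/phiI; rewrite phi_v phi_u.
Qed.

Lemma card_collisions u p : #|collisions u p| <= #|V| ^ (#|T| - 2).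
Proof.
case: p => x y.
have [/andP[/andP[xy xu] yu]|degenerate] := boolP ((x != y) && (x != u) && (y != u));
  last first.
  suff -> : collisions u (x, y) = set0 by rewrite cards0.
  apply/setP => phi; rewrite !inE /=.
  by case: ((x != y) && (x != u) && (y != u)) degenerate.
pose S := {w : T | (w != u) && (w != x)}.
pose restr (phi : {ffun T -> V}) := [ffun w : S => phi (val w)].
have card_S : #|{: S}| = (#|T| - 2)%N.
  rewrite card_sig.
  have -> : #|[pred w | (w != u) && (w != x)]| = #|~: [set u; x]|.
    by apply: eq_card => w; rewrite !inE negb_or.
  have := cardsC [set u; x]; rewrite cards2 eq_sym xu; lia.
rewrite -card_S -card_ffun -(card_in_imset (f := restr)); first exact: max_card.
move=> phi psi; rewrite !inE /= xy xu yu /=.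
move=> /andP[/eqP phi_u /eqP phi_xy] /andP[/eqP psi_u /eqP psi_xy] /ffunP e.
have eqS w (wS : (w != u) && (w != x)) : phi w = psi w.
  by have := e (exist _ w wS); rewrite !ffunE.
apply/ffunP => w; case: (eqVneq w u) => [->|wu]; first by rewrite phi_u psi_u.
case: (eqVneq w x) => [->|wx]; last by apply: eqS; rewrite wu wx.
by rewrite phi_xy psi_xy; apply: eqS; rewrite yu eq_sym xy.
Qed.

(* A non-injective homomorphism in homs_at u identifies two vertices other than u. *)
Lemma card_homs_at_le u : #|homs_at u| <= #|embeddings_at u| + #|T| ^ 2 * #|V| ^ (#|T| - 2).
Proof.
rewrite -(cardsID (embeddings_at u) (homs_at u)) (setIidPr (embeddings_at_sub u)).
have -> : (#|T| ^ 2 = #|{: T * T}|)%N by rewrite card_prod.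
rewrite leq_add2l -sum_nat_const.
apply: (@leq_trans (\sum_(p : T * T) #|collisions u p|)); last first.
  by apply: leq_sum => p _; apply: card_collisions.
rewrite sum_card_exchange -sum1_card big_mkcond /=; apply: leq_sum => phi _.
case: ifP => // phi_hom; rewrite !inE in phi_hom.
case/andP: phi_hom => /negP not_emb /andP[/andP[phiH /eqP phi_u] phi_V].
case: (pickP (fun p : T * T => (p.1 != p.2) && (phi p.1 == phi p.2)))
  => [[x y] /= /andP[xy /eqP phi_xy]|none].
  apply/card_gt0P; exists (x, y); rewrite !inE /= xy phi_u eqxx phi_xy eqxx /= !andbT.
  apply/andP; split.
    apply: contraTneq (forallP phi_V y) => xu; move: xy; rewrite xu => uy.
    by rewrite eq_sym uy -phi_xy xu phi_u.
  apply: contraTneq (forallP phi_V x) => yu; move: xy; rewrite yu => xu.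
  by rewrite xu phi_xy yu phi_u.
exfalso; apply: not_emb; rewrite phi_u eqxx andbT phiH andbT.
apply/injectiveP => x y e; apply/eqP.
by have := none (x, y); rewrite /= e eqxx andbT => /negbFE.
Qed.

Hypotheses (irr : irreflexive adj) (r_pos : 0 < r) (crit : r_critical adj r).

(* An embedding avoiding z would r-colour F by the part index of the image. *)
Lemma card_embedding_to_z phi : phi \in embeddings adj G -> #|[set u | phi u == None]| = 1.
Proof.
rewrite inE => /andP[/injectiveP phiI phiH].
have [u0 phi_u0] : exists u0, phi u0 = None.
  case: (pickP (fun u => phi u == None)) => [u0 /eqP phi_u0|not_z]; first by exists u0.
  exfalso; apply: (r_critical_no_coloring irr crit
     (g := fun x => if phi x is Some q then tag q else Ordinal r_pos)) => x y axy.
  have := forallP (forallP phiH x) y; rewrite axy /=.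
  by have := not_z x; have := not_z y; case: (phi x) => [qx|] //; case: (phi y).
rewrite -(cards1 u0); apply: eq_card => u; rewrite !inE.
by apply/eqP/eqP => [phi_u|->//]; apply: phiI; rewrite phi_u phi_u0.
Qed.

Lemma card_embeddings_sum : #|embeddings adj G| = \sum_u #|embeddings_at u|.
Proof.
rewrite sum_card_exchange -sum1_card big_mkcond /=; apply: eq_bigr => phi _.
case: ifP => phi_emb; have := phi_emb; rewrite inE => phi_emb'.
  by rewrite -(card_embedding_to_z phi_emb); apply: eq_card => u; rewrite !inE phi_emb'.
by apply/esym/eqP; rewrite cards_eq0; apply/eqP/setP => u; rewrite !inE phi_emb'.
Qed.

End Host.

Lemma sum_ord_lt m k : \sum_(j < m | j < k) 1 = minn m k.
Proof.
elim: m => [|m IHm]; first by rewrite big_ord0 min0n.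
rewrite big_mkcond big_ord_recr /= -big_mkcond IHm; case: ltnP; lia.
Qed.

Lemma card_host_part r (n d : 'I_r -> nat) i0 (b : bool) : d i0 <= n i0 ->
  #|[pred p : hostV n | if p is Some q then (tag q == i0) && (b ==> (tagged q < d (tag q)))
                        else false]| = if b then d i0 else n i0.
Proof.
move=> dn.
set P := fun q : {i : 'I_r & 'I_(n i)} => (tag q == i0) && (b ==> (tagged q < d (tag q))).
have -> : #|[pred p : hostV n | if p is Some q then P q else false]| = #|[set q | P q]|.
  rewrite -(card_imset _ (@Some_inj _)); apply: eq_card => -[q|].
    by rewrite !inE (mem_imset _ _ (@Some_inj _)) inE.
  by rewrite !inE; apply/esym/negbTE/imsetP => -[q].
rewrite -sum1_card (eq_bigl P) => [|q]; last by rewrite inE.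
rewrite {}/P -(sig_big_dep (fun i => i == i0) (fun i (j : 'I_(n i)) => b ==> (j < d i))
  (fun _ _ => 1%N)).
by rewrite big_pred1_eq; case: b => /=; rewrite ?sum_ord_lt ?sum1_card ?card_ord //; lia.
Qed.

Lemma prod_sig_neq (T : finType) (u : T) (F : T -> nat) :
  \prod_(w | w != u) F w = \prod_(v : {x : T | x != u}) F (val v).
Proof.
rewrite (reindex_omap (val : {x : T | x != u} -> T) insub) => [|w wu]; last by rewrite insubT.
by apply: eq_bigl => v; rewrite valK eqxx andbT (valP v).
Qed.

Section Colorings.
Variables (T : finType) (adj : rel T) (r : nat) (n d : 'I_r -> nat) (u : T).
Local Notation V := (hostV n).
Local Notation G := (@host_adj r n d).
Local Notation coloring := {ffun {x : T | x != u} -> 'I_r}.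

Definition respects (c : coloring) (w : T) (p : V) : bool :=
  if insub w is Some v then
    if p is Some q then (tag q == c v) && (adj u w ==> (tagged q < d (tag q))) else false
  else p == None.

Definition coloring_fiber c := [set phi : {ffun T -> V} | [forall w, respects c w (phi w)]].

Definition color_count (c : coloring) :=
  \prod_(i < r) (d i ^ #|[set v | adj u (val v) & c v == i]| *
                 n i ^ #|[set v | ~~ adj u (val v) & c v == i]|).

Lemma respects_val c (v : {x : T | x != u}) p : respects c (val v) p =
  if p is Some q then (tag q == c v) && (adj u (val v) ==> (tagged q < d (tag q))) else false.
Proof. by rewrite /respects valK. Qed.

Lemma respects_u c p : respects c u p = (p == None).
Proof. by rewrite /respects insubF ?eqxx. Qed.

Lemma card_coloring_fiber c : (forall i, d i <= n i) -> #|coloring_fiber c| = color_count c.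
Proof.
move=> dn.
have -> : #|coloring_fiber c| = #|family (fun w => [pred p | respects c w p])|.
  apply: eq_card => phi; rewrite inE.
  by apply/forallP/familyP => h w; have := h w; rewrite inE.
rewrite card_family foldrE big_map big_enum /= (bigD1 u) //=.
have -> : #|[pred p | respects c u p]| = 1%N.
  by rewrite -(card1 (None : V)); apply: eq_card => p; rewrite !inE respects_u.
rewrite mul1n prod_sig_neq.
rewrite (eq_bigr (fun v => if adj u (val v) then d (c v) else n (c v))) => [|v _].
  rewrite (partition_big (fun v => c v) xpredT) //=; apply: eq_bigr => i _.
  rewrite (bigID (fun v => adj u (val v))) /= -!prod_nat_const; congr (_ * _)%N.
    by apply: eq_big => [v|v /andP[/eqP <- ->]] //; rewrite !inE andbC.
  by apply: eq_big => [v|v /andP[/eqP <- /negbTE ->]] //; rewrite !inE andbC.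
rewrite -(card_host_part (adj u (val v)) (dn (c v))).
by apply: eq_card => p; rewrite !inE /respects valK.
Qed.

Hypotheses (irr : irreflexive adj) (sym : symmetric adj) (r_pos : 0 < r).

Definition coloring_of (phi : {ffun T -> V}) : coloring :=
  [ffun v => if phi (val v) is Some q then tag q else Ordinal r_pos].

Lemma coloring_fiber_homs c phi :
  proper_coloring adj c -> phi \in coloring_fiber c -> phi \in homs_at adj n d u.
Proof.
move=> c_ok; rewrite !inE => /forallP phi_c.
have phi_u : phi u = None by apply/eqP; rewrite -(respects_u c); apply: phi_c.
have phi_v (v : {x : T | x != u}) : exists q, [/\ phi (val v) = Some q, tag q = c v &
    (adj u (val v) -> tagged q < d (tag q))].
  have := phi_c (val v); rewrite respects_val.
  case: (phi (val v)) => [q /andP[/eqP tag_q /implyP lt_q]|] //; by exists q.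
rewrite phi_u eqxx andbT; apply/andP; split; last first.
  apply/forallP => w; apply/implyP => wu; have [q [phi_w _ _]] := phi_v (Sub w wu).
  by rewrite /= in phi_w; rewrite phi_w.
apply/forallP => x; apply/forallP => y; apply/implyP => axy.
case: (eqVneq x u) => [xu|xu].
  have yu : y != u by apply: contraTneq axy => ->; rewrite -xu irr.
  have [q [phi_y _ lt_q]] := phi_v (Sub y yu); rewrite /= in phi_y lt_q.
  by rewrite xu phi_u phi_y /= lt_q // -xu.
case: (eqVneq y u) => [yu|yu].
  have [q [phi_x _ lt_q]] := phi_v (Sub x xu); rewrite /= in phi_x lt_q.
  by rewrite yu phi_u phi_x /= lt_q // sym -yu.
have [q [phi_x tag_x _]] := phi_v (Sub x xu); have [q' [phi_y tag_y _]] := phi_v (Sub y yu).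
rewrite /= in phi_x phi_y; rewrite phi_x phi_y /= tag_x tag_y.
by have /implyP := forallP (forallP c_ok (Sub x xu)) (Sub y yu); apply.
Qed.

Lemma coloring_fiber_coloring_of c phi : phi \in coloring_fiber c -> c = coloring_of phi.
Proof.
rewrite inE => /forallP phi_c; apply/ffunP => v; rewrite ffunE.
have := phi_c (val v); rewrite respects_val.
by case: (phi (val v)) => [q /andP[/eqP tag_q _]|] //; rewrite tag_q.
Qed.

Lemma homs_at_coloring_fiber phi : phi \in homs_at adj n d u ->
  (phi \in coloring_fiber (coloring_of phi)) && proper_coloring adj (coloring_of phi).
Proof.
rewrite inE => /andP[/andP[phiH /eqP phi_u] phi_V].
have phi_v (v : {x : T | x != u}) : exists q, phi (val v) = Some q.
  by have := forallP phi_V (val v); rewrite (valP v); case: (phi (val v)) => [q|] //; exists q.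
apply/andP; split.
  rewrite inE; apply/forallP => w.
  case: (eqVneq w u) => [->|wu]; first by rewrite respects_u phi_u.
  set v : {x : T | x != u} := Sub w wu; have [q phi_w] := phi_v v.
  rewrite [w](_ : _ = val v) // respects_val phi_w ffunE phi_w eqxx /=; apply/implyP => auw.
  by have := forallP (forallP phiH u) (val v); rewrite auw phi_u phi_w.
apply/forallP => v; apply/forallP => w; apply/implyP => avw.
have [q phi_v'] := phi_v v; have [q' phi_w] := phi_v w.
rewrite !ffunE phi_v' phi_w.
by have := forallP (forallP phiH (val v)) (val w); rewrite avw phi_v' phi_w.
Qed.

(* Homomorphisms sending exactly u to z are partitioned by the colouring of
   F - u they induce through the part index. *)
Lemma card_homs_at : (forall i, d i <= n i) ->
  #|homs_at adj n d u| = \sum_(c | proper_coloring adj c) color_count c.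
Proof.
move=> dn; under eq_bigr do rewrite -card_coloring_fiber //.
rewrite big_mkcond /=.
rewrite (eq_bigr (fun c => #|if proper_coloring adj c then coloring_fiber c else set0|));
  last by move=> c _; case: ifP; rewrite ?cards0.
rewrite sum_card_exchange -sum1_card big_mkcond /=; apply: eq_bigr => phi _.
case: ifP => phi_hom.
  have /andP[phi_fib c_ok] := homs_at_coloring_fiber phi_hom.
  rewrite -(cards1 (coloring_of phi)); apply: eq_card => c; rewrite !inE.
  apply/eqP/idP => [->|]; first by rewrite c_ok phi_fib.
  by case: ifP => _; [apply: coloring_fiber_coloring_of | rewrite inE].
apply/esym/eqP; rewrite cards_eq0; apply/eqP/setP => c; rewrite !inE.
case: ifP => c_ok; last by rewrite inE.
by apply/negP => phi_fib; rewrite (coloring_fiber_homs c_ok phi_fib) in phi_hom.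
Qed.

End Colorings.

Local Open Scope ring_scope.

Section Approximation.
Variables (R : realType) (del : R).
Hypothesis del_ge0 : 0 <= del.

(* The invariant of a product of m factors each in [-2, 2], with the factors
   of a and b pairwise within del of each other. *)
Definition approx (a b : R) (m : nat) :=
  [/\ `|a| <= 2 ^+ m, `|b| <= 2 ^+ m & `|a - b| <= m%:R * 2 ^+ m * del].

Lemma approx1 : approx 1 1 0.
Proof. by rewrite /approx subrr normr0 normr1 expr0 !mul0r. Qed.

Lemma approxM a b m a' b' m' :
  approx a b m -> approx a' b' m' -> approx (a * a') (b * b') (m + m').
Proof.
move=> [ha hb hab] [ha' hb' hab']; rewrite /approx !normrM exprD.
split; [exact: ler_pM | exact: ler_pM |].
have -> : a * a' - b * b' = a * (a' - b') + (a - b) * b' by ring.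
apply: (le_trans (ler_normD _ _)); rewrite !normrM natrD.
have h1 : `|a| * `|a' - b'| <= 2 ^+ m * (m'%:R * 2 ^+ m' * del) by apply: ler_pM.
have h2 : `|a - b| * `|b'| <= (m%:R * 2 ^+ m * del) * 2 ^+ m' by apply: ler_pM.
by apply: (le_trans (lerD h1 h2)); rewrite le_eqVlt; apply/orP; left; apply/eqP; ring.
Qed.

Lemma approxX a b k : approx a b 1 -> approx (a ^+ k) (b ^+ k) k.
Proof.
move=> ab; elim: k => [|k IHk]; first by rewrite !expr0; apply: approx1.
by rewrite !exprS -addn1 addnC; apply: approxM.
Qed.

Lemma approx_base a b : `|a| <= 2 -> `|b| <= 2 -> `|a - b| <= del -> approx a b 1.
Proof.
by move=> ha hb hab; rewrite /approx expr1 mulr1n mul1r; split => //; have := del_ge0; lra.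
Qed.

Lemma approx_prod (I : finType) (A B : I -> R) (m : I -> nat) :
  (forall i, approx (A i) (B i) (m i)) -> approx (\prod_i A i) (\prod_i B i) (\sum_i m i)%N.
Proof.
by move=> AB; apply: (big_ind3 approx) => //; [apply: approx1 | move=> *; apply: approxM].
Qed.

End Approximation.

Lemma prod_counts_approx (R : realType) r (D M y x : 'I_r -> nat) m (N del : R)
    (xi : 'I_r -> R) :
  0 < N -> 0 <= del -> del <= 1 -> (0 < r)%N -> (\sum_i (y i + x i))%N = m ->
  (forall i, (D i <= M i)%N) -> (forall i, (M i)%:R <= N) ->
  (forall i, `|xi i - (D i)%:R / N| <= del) ->
  (forall i, `|(M i)%:R / N - r%:R^-1| <= del) ->
  `|\prod_i ((D i)%:R ^+ y i * (M i)%:R ^+ x i) -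
    N ^+ m * \prod_i ((r%:R ^+ x i)^-1 * xi i ^+ y i)| <= m%:R * 2 ^+ m * del * N ^+ m.
Proof.
move=> N_pos del_ge0 del_le1 r_pos sum_yx DM MN xi_near M_near.
have N_neq0 : N != 0 by rewrite gt_eqF.
have -> : \prod_i ((D i)%:R ^+ y i * (M i)%:R ^+ x i) =
    N ^+ m * \prod_i (((D i)%:R / N) ^+ y i * ((M i)%:R / N) ^+ x i).
  rewrite -sum_yx -prodrXr -big_split /=; apply: eq_bigr => i _.
  by rewrite exprD !expr_div_n; field; rewrite !expf_neq0.
have -> : \prod_i ((r%:R ^+ x i)^-1 * xi i ^+ y i) = \prod_i (xi i ^+ y i * r%:R^-1 ^+ x i).
  by apply: eq_bigr => i _; rewrite exprVn mulrC.
rewrite -mulrBr normrM (ger0_norm (exprn_ge0 _ (ltW N_pos))) mulrC.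
apply: ler_wpM2r; first exact: (exprn_ge0 _ (ltW N_pos)).
have ratio_01 k : k%:R <= N -> 0 <= k%:R / N <= 1.
  by move=> kN; rewrite divr_ge0 ?(ltW N_pos) //= ler_pdivrMr // mul1r.
have DN i : 0 <= (D i)%:R / N <= 1 by apply: ratio_01; apply: le_trans (MN i); rewrite ler_nat.
have r_01 : 0 <= (r%:R : R)^-1 <= 1 by rewrite invr_ge0 ler0n invf_le1 ?ltr0n // ler1n.
suff [_ _] : approx del (\prod_i (((D i)%:R / N) ^+ y i * ((M i)%:R / N) ^+ x i))
    (\prod_i (xi i ^+ y i * r%:R^-1 ^+ x i)) m by [].
rewrite -sum_yx; apply: approx_prod => i; apply: approxM; apply: approxX;
  apply: (approx_base del_ge0).
- by have /andP[? ?] := DN i; rewrite ger0_norm //; lra.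
- have /andP[? ?] := DN i; have := xi_near i.
  by rewrite !ler_norml => /andP[? ?]; lra.
- by rewrite distrC.
- by have /andP[? ?] := ratio_01 _ (MN i); rewrite ger0_norm //; lra.
- by case/andP: r_01 => ? ?; rewrite ger0_norm //; lra.
- exact: M_near.
Qed.

Lemma sum_card_color_classes (T : finType) (adj : rel T) r (u : T)
    (c : {ffun {x : T | x != u} -> 'I_r}) :
  (\sum_(i < r) (#|[set v | adj u (val v) & c v == i]| +
                 #|[set v | ~~ adj u (val v) & c v == i]|) = #|T|.-1)%N.
Proof.
rewrite (eq_bigr (fun i => #|[set v | c v == i]|)) => [|i _]; last first.
  rewrite -(cardsID [set v | adj u (val v)] [set v | c v == i]).
  by congr (_ + _)%N; apply: eq_card => v; rewrite !inE andbC.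
rewrite sum_card_exchange -(cardC1 u).
have -> : #|predC1 u| = #|{: {x : T | x != u}}| by rewrite card_sig; apply: eq_card.
rewrite -sum1_card; apply: eq_bigr => v _.
by rewrite -(cards1 (c v)); apply: eq_card => i; rewrite !inE eq_sym.
Qed.

Definition color_weight (R : realType) (T : finType) (adj : rel T) r (xi : 'I_r -> R) (u : T)
    (c : {ffun {x : T | x != u} -> 'I_r}) : R :=
  \prod_(i < r) ((r%:R ^+ #|[set v | ~~ adj u (val v) & c v == i]|)^-1 *
                 xi i ^+ #|[set v | adj u (val v) & c v == i]|).

Definition colorings_weight (R : realType) (T : finType) (adj : rel T) r (xi : 'I_r -> R) : R :=
  \sum_(u : T) \sum_(c : {ffun {x : T | x != u} -> 'I_r} | proper_coloring adj c)
    color_weight adj xi c.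

Definition embedding_error (T : finType) r : nat :=
  \sum_(u : T) (#|T| ^ 2 * 2 ^ (#|T| - 2) +
                #|{: {ffun {x : T | x != u} -> 'I_r}}| * (#|T|.-1 * 2 ^ #|T|.-1)).

Lemma exp_succ_le (R : realType) (N del : R) k :
  1 <= N -> 1 < N * del -> (N + 1) ^+ k <= 2 ^+ k * (del * N ^+ k.+1).
Proof.
move=> N_ge1 N_del.
have -> : del * N ^+ k.+1 = N ^+ k * (N * del) by rewrite exprS; ring.
rewrite mulrA -exprMn; apply: le_trans (ler_peMr _ (ltW N_del)).
  by apply: lerXn2r; rewrite ?nnegrE; lra.
by apply: exprn_ge0; lra.
Qed.

Section Estimate.
Variables (R : realType) (T : finType) (adj : rel T) (r : nat).
Variables (n d : 'I_r -> nat) (xi : 'I_r -> R) (del : R).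
Hypotheses (irr : irreflexive adj) (r_pos : (0 < r)%N) (crit : r_critical adj r).
Local Notation N := (\sum_(i < r) n i)%N.
Local Notation f := #|T|.

Lemma PF_proper_colorings : PF adj xi = (aut_num adj)%:R^-1 * colorings_weight adj xi.
Proof.
congr (_ * _); rewrite /colorings_weight big_mkcond /=; apply: eq_bigr => u _.
case: ifP => u_crit; first by apply: eq_bigl.
apply/esym/big_pred0 => c; apply: contraFF u_crit.
exact: crit_vertex_of_coloring.
Qed.

Lemma Fcount_PF_le (X : R) :
  `|(Fcount adj n d)%:R - X * PF adj xi| <=
  `|(#|embeddings adj (@host_adj r n d)|)%:R - X * colorings_weight adj xi|.
Proof.
have aut_pos : (0 < aut_num adj)%N.
  apply/card_gt0P; exists 1%g; rewrite inE; apply/forallP => x; apply/forallP => y.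
  by rewrite !perm1.
rewrite PF_proper_colorings -(sub_copies_mul_aut adj) natrM.
set A := (aut_num adj)%:R; set S := colorings_weight adj xi.
have A_ge1 : 1 <= A by rewrite ler1n.
have -> : (Fcount adj n d)%:R * A - X * S = ((Fcount adj n d)%:R - X * (A^-1 * S)) * A.
  by field; rewrite gt_eqF //; lra.
by rewrite normrM (ger0_norm (le_trans ler01 A_ge1)) ler_peMr.
Qed.

Hypotheses (sym : symmetric adj) (dn : forall i, (d i <= n i)%N).
Hypotheses (del_ge0 : 0 <= del) (del_le1 : del <= 1) (N_del : 1 < N%:R * del).
Hypotheses (xi_near : forall i, `|xi i - (d i)%:R / N%:R| <= del).
Hypotheses (n_near : forall i, `|(n i)%:R / N%:R - r%:R^-1| <= del).

Lemma N_gt1 : 1 < N%:R :> R.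
Proof. by apply: lt_le_trans N_del _; apply: ler_piMr. Qed.

Lemma embeddings_at_approx u :
  `|(#|embeddings_at adj n d u|)%:R - (#|homs_at adj n d u|)%:R| <=
  (f ^ 2 * 2 ^ (f - 2))%:R * (del * N%:R ^+ f.-1).
Proof.
have f_ge2 : (2 <= f)%N by have := r_critical_lt_card irr crit; lia.
have homs_le := card_homs_at_le adj n d u; rewrite card_hostV in homs_le.
have emb_le := subset_leq_card (embeddings_at_sub adj n d u).
rewrite distrC ger0_norm ?subr_ge0 ?ler_nat // lerBlDl.
move: homs_le; rewrite -(ler_nat R) => /le_trans; apply.
rewrite natrD lerD2l !natrM -!mulrA; do 2 apply: ler_wpM2l => //.
rewrite !natrX -natr1 (_ : f.-1 = (f - 2).+1); last by lia.
by apply: exp_succ_le => //; apply: ltW N_gt1.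
Qed.

Lemma color_count_approx u (c : {ffun {x : T | x != u} -> 'I_r}) :
  `|(color_count adj n d c)%:R - N%:R ^+ f.-1 * color_weight adj xi c| <=
  (f.-1 * 2 ^ f.-1)%:R * (del * N%:R ^+ f.-1).
Proof.
have N_pos : 0 < N%:R :> R by apply: lt_trans N_gt1.
have n_le i : (n i)%:R <= N%:R :> R by rewrite ler_nat (bigD1 i) //= leq_addr.
have := prod_counts_approx N_pos del_ge0 del_le1 r_pos (sum_card_color_classes adj c) dn n_le
  xi_near n_near.
rewrite /color_count /color_weight natr_prod => approx_le.
under eq_bigr do rewrite natrM !natrX.
by apply: le_trans approx_le _; rewrite natrM natrX !mulrA.
Qed.

Lemma card_embeddings_approx :
  `|(#|embeddings adj (@host_adj r n d)|)%:R - N%:R ^+ f.-1 * colorings_weight adj xi| <=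
  (embedding_error T r)%:R * (del * N%:R ^+ f.-1).
Proof.
rewrite card_embeddings_sum // natr_sum /colorings_weight mulr_sumr -sumrB.
rewrite /embedding_error natr_sum mulr_suml.
apply: le_trans (ler_norm_sum _ _ _) (ler_sum _ _) => u _.
rewrite -(subrKA (#|homs_at adj n d u|)%:R) natrD mulrDl.
apply: le_trans (ler_normD _ _) (lerD (embeddings_at_approx u) _).
rewrite (card_homs_at u irr sym r_pos dn) natr_sum mulr_sumr -sumrB.
apply: le_trans (ler_norm_sum _ _ _) _.
apply: le_trans (ler_sum _ (fun c _ => color_count_approx c)) _.
rewrite sumr_const -[_ *+ #|_|]mulr_natl [in X in _ <= X]natrM -mulrA; apply: ler_wpM2r.
  by rewrite !mulr_ge0 ?del_ge0 ?exprn_ge0.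
by rewrite ler_nat max_card.
Qed.

End Estimate.

Lemma dist_divr (R : numFieldType) (a b c e : R) :
  0 < c -> `|a - b| <= e * c -> `|a / c - b / c| <= e.
Proof. by move=> c_pos ab; rewrite -mulrBl normrM normfV (gtr0_norm c_pos) ler_pdivrMr. Qed.

Unset Implicit Arguments.

Theorem lemma5 (R : realType) (r f : nat) (adj : rel 'I_f) :
  (2 <= r)%N -> symmetric adj -> irreflexive adj -> r_critical adj r ->
  forall eps : R, 0 < eps ->
  exists delta : R, 0 < delta /\
    forall (n d : 'I_r -> nat) (xi : 'I_r -> R),
      let N : nat := (\sum_(i < r) n i)%N in
      1 / delta < N%:R ->
      (forall i, (d i <= n i)%N) ->
      (forall i, `|(n i)%:R - N%:R / r%:R| <= delta * N%:R) ->
      (forall i, `|xi i - (d i)%:R / N%:R| <= delta) ->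
      `|(Fcount adj n d)%:R - N%:R ^+ f.-1 * PF adj xi| < eps * N%:R ^+ f.-1.
Proof.
move=> r_ge2 sym irr crit eps eps_pos.
have r_pos : (0 < r)%N by apply: leq_trans r_ge2.
set C : R := (embedding_error 'I_f r).+1%:R.
have C_pos : 0 < C by rewrite ltr0n.
have delta_pos : 0 < Num.min 1 (eps / (2 * C)) by rewrite lt_min ltr01 divr_gt0 ?mulr_gt0.
exists (Num.min 1 (eps / (2 * C))); split => // n d xi N N_large dn n_near xi_near.
set del := Num.min 1 (eps / (2 * C)) in delta_pos N_large n_near xi_near *.
have del_le1 : del <= 1 by rewrite ge_min lexx.
have del_C : del * C <= eps / 2.
  have : del <= eps / (2 * C) by rewrite ge_min lexx orbT.
  by rewrite !ler_pdivlMr ?mulr_gt0 //; lra.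
have N_del : 1 < N%:R * del by rewrite -ltr_pdivrMr.
have N_pos : 0 < N%:R :> R by apply: lt_trans (N_gt1 del_le1 N_del).
have ratio i : `|(n i)%:R / N%:R - r%:R^-1| <= del.
  by have := dist_divr N_pos (n_near i); rewrite mulrAC divff ?mul1r // gt_eqF.
have := card_embeddings_approx irr r_pos crit sym dn (ltW delta_pos) del_le1 N_del
  xi_near ratio.
rewrite card_ord => approx_le.
apply: le_lt_trans (Fcount_PF_le n d xi irr r_pos crit _) _.
apply: le_lt_trans approx_le _; rewrite mulrA ltr_pM2r ?exprn_gt0 //.
have : (embedding_error 'I_f r)%:R * del < C * del by rewrite ltr_pM2r // ltr_nat.
lra.
Qed.
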